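(* Let $\Gamma$ be a cubic ($3$-regular) finite connected undirected graph with girth $g(\Gamma)\ge5$, and let $(u_{ij})$ be the generators of $C(G_{aut}^+(\Gamma))$. Then $u_{ij}u_{kl}=u_{kl}u_{ij}$ for all vertices $i,j,k,l$ with $d(i,k)=2=d(j,l)$.
   Context: $d$ is the graph distance; the girth is the length of a shortest cycle. For a finite simple undirected graph $\Gamma=(V,E)$ with $V=\{1,\dots,n\}$, $C(G_{aut}^+(\Gamma))$ is the universal unital $C^*$-algebra generated by $u_{ij}$, $1\le i,j\le n$, with relations: (R1) $u_{ij}=u_{ij}^*=u_{ij}^2$; (R2) $\sum_{l} u_{il}=1=\sum_{l} u_{li}$ for all $i$; (R3) $u_{ij}u_{kl}=u_{kl}u_{ij}=0$ whenever exactly one of $(i,k)\in E$, $(j,l)\in E$ holds. *)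

From Stdlib Require Import Reals List Arith.
Import ListNotations.
Open Scope R_scope.

Definition Cpx : Type := (R * R)%type.
Definition Cadd (a b : Cpx) : Cpx := (fst a + fst b, snd a + snd b).
Definition Cmul (a b : Cpx) : Cpx :=
  (fst a * fst b - snd a * snd b, fst a * snd b + snd a * fst b).
Definition Cone : Cpx := (1, 0).
Definition Cconj (a : Cpx) : Cpx := (fst a, - snd a).
Definition Cabs (a : Cpx) : R := sqrt (fst a * fst a + snd a * snd a).

Record CstarAlg := {
  cs_car :> Type;
  cs_zero : cs_car;
  cs_one : cs_car;
  cs_add : cs_car -> cs_car -> cs_car;
  cs_opp : cs_car -> cs_car;
  cs_mul : cs_car -> cs_car -> cs_car;
  cs_smul : Cpx -> cs_car -> cs_car;
  cs_star : cs_car -> cs_car;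
  cs_norm : cs_car -> R;
  cs_addA : forall x y z, cs_add x (cs_add y z) = cs_add (cs_add x y) z;
  cs_addC : forall x y, cs_add x y = cs_add y x;
  cs_add0 : forall x, cs_add cs_zero x = x;
  cs_addN : forall x, cs_add (cs_opp x) x = cs_zero;
  cs_mulA : forall x y z, cs_mul x (cs_mul y z) = cs_mul (cs_mul x y) z;
  cs_mul1l : forall x, cs_mul cs_one x = x;
  cs_mul1r : forall x, cs_mul x cs_one = x;
  cs_mulDl : forall x y z, cs_mul (cs_add x y) z = cs_add (cs_mul x z) (cs_mul y z);
  cs_mulDr : forall x y z, cs_mul x (cs_add y z) = cs_add (cs_mul x y) (cs_mul x z);
  cs_smulDr : forall a x y, cs_smul a (cs_add x y) = cs_add (cs_smul a x) (cs_smul a y);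
  cs_smulDl : forall a b x, cs_smul (Cadd a b) x = cs_add (cs_smul a x) (cs_smul b x);
  cs_smulA : forall a b x, cs_smul (Cmul a b) x = cs_smul a (cs_smul b x);
  cs_smul1 : forall x, cs_smul Cone x = x;
  cs_smulMl : forall a x y, cs_smul a (cs_mul x y) = cs_mul (cs_smul a x) y;
  cs_smulMr : forall a x y, cs_smul a (cs_mul x y) = cs_mul x (cs_smul a y);
  cs_starK : forall x, cs_star (cs_star x) = x;
  cs_starD : forall x y, cs_star (cs_add x y) = cs_add (cs_star x) (cs_star y);
  cs_starM : forall x y, cs_star (cs_mul x y) = cs_mul (cs_star y) (cs_star x);
  cs_starZ : forall a x, cs_star (cs_smul a x) = cs_smul (Cconj a) (cs_star x);
  cs_norm_eq0 : forall x, cs_norm x = 0 -> x = cs_zero;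
  cs_normD : forall x y, cs_norm (cs_add x y) <= cs_norm x + cs_norm y;
  cs_normZ : forall a x, cs_norm (cs_smul a x) = Cabs a * cs_norm x;
  cs_normM : forall x y, cs_norm (cs_mul x y) <= cs_norm x * cs_norm y;
  cs_normC : forall x, cs_norm (cs_mul (cs_star x) x) = cs_norm x * cs_norm x;
  cs_complete : forall s : nat -> cs_car,
    (forall eps, 0 < eps -> exists N, forall p q, (N <= p)%nat -> (N <= q)%nat ->
        cs_norm (cs_add (s p) (cs_opp (s q))) < eps) ->
    exists L, forall eps, 0 < eps -> exists N, forall p, (N <= p)%nat ->
        cs_norm (cs_add (s p) (cs_opp L)) < eps
}.

Definition cs_sum (A : CstarAlg) (n : nat) (f : nat -> A) : A :=
  fold_right (fun i acc => cs_add A (f i) acc) (cs_zero A) (seq 0 n).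

(** * Finite simple graphs on vertex set {0,...,n-1}
    (vertex i here corresponds to vertex i+1 of the paper). *)
Definition simple_graph (n : nat) (adj : nat -> nat -> bool) : Prop :=
  (forall i j, adj i j = adj j i) /\ (forall i, adj i i = false).

Definition nbrs (n : nat) (adj : nat -> nat -> bool) (i : nat) : list nat :=
  filter (adj i) (seq 0 n).

Definition cubic (n : nat) (adj : nat -> nat -> bool) : Prop :=
  forall i, (i < n)%nat -> length (nbrs n adj i) = 3%nat.

Definition walk (n : nat) (adj : nat -> nat -> bool) (m i k : nat) : Prop :=
  exists p : nat -> nat, p 0%nat = i /\ p m = k /\
    (forall t, (t <= m)%nat -> (p t < n)%nat) /\
    (forall t, (t < m)%nat -> adj (p t) (p (S t)) = true).

Definition connected (n : nat) (adj : nat -> nat -> bool) : Prop :=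
  forall i k, (i < n)%nat -> (k < n)%nat -> exists m, walk n adj m i k.

Definition dist_eq (n : nat) (adj : nat -> nat -> bool) (i k m : nat) : Prop :=
  walk n adj m i k /\ forall m', (m' < m)%nat -> ~ walk n adj m' i k.

Definition is_cycle (n : nat) (adj : nat -> nat -> bool) (m : nat) (c : nat -> nat) : Prop :=
  (3 <= m)%nat /\
  (forall t, (t < m)%nat -> (c t < n)%nat) /\
  (forall s t, (s < m)%nat -> (t < m)%nat -> c s = c t -> s = t) /\
  (forall t, (t < m)%nat -> adj (c t) (c ((S t) mod m)) = true).

Definition girth_ge (n : nat) (adj : nat -> nat -> bool) (g : nat) : Prop :=
  forall m c, is_cycle n adj m c -> (g <= m)%nat.

Definition aut_relations (n : nat) (adj : nat -> nat -> bool)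
    (A : CstarAlg) (u : nat -> nat -> A) : Prop :=
  (forall i j, (i < n)%nat -> (j < n)%nat ->
      u i j = cs_star A (u i j) /\ u i j = cs_mul A (u i j) (u i j)) /\
  (forall i, (i < n)%nat ->
      cs_sum A n (fun l => u i l) = cs_one A /\ cs_sum A n (fun l => u l i) = cs_one A) /\
  (forall i j k l, (i < n)%nat -> (j < n)%nat -> (k < n)%nat -> (l < n)%nat ->
      xorb (adj i k) (adj j l) = true ->
      cs_mul A (u i j) (u k l) = cs_zero A /\ cs_mul A (u k l) (u i j) = cs_zero A).

From Stdlib Require Import Reals List Arith Lia.
Import ListNotations.

(* The key identity is u_ij u_kl = u_ij u_kl u_pq u_ij, where p and q are
   common neighbours of i, k and of j, l.  Since u_pq commutes with u_kl, its
   right-hand side is self-adjoint, and taking adjoints gives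
   u_kl u_ij = u_ij u_kl.  All identities are obtained by inserting a
   partition of unity sum_c u_vc and discarding the terms killed by (R3):
   girth >= 5 makes common neighbours unique, so a single term survives, and
   cubicity bounds the neighbours of q.  The same device yields the row
   orthogonality u_ij u_ib = 0 without any positivity argument: if j and b
   have a common neighbour c0, summing over the column c0 gives
   u_ij u_ib = 3 u_ij u_ib. *)

Local Open Scope nat_scope.
Local Notation "x ** y" := (cs_mul _ x y) (at level 40, left associativity).

Section CstarArith.
Context {A : CstarAlg}.

Lemma cs_addr0 (x : A) : cs_add A x (cs_zero A) = x.
Proof. rewrite cs_addC; apply cs_add0. Qed.

Lemma cs_addr_eq_self (x a : A) : cs_add A x a = x -> a = cs_zero A.
Proof.
  intros H.
  assert (E : cs_add A (cs_opp A x) (cs_add A x a) = cs_add A (cs_opp A x) x)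
    by now rewrite H.
  now rewrite cs_addA, cs_addN, cs_add0 in E.
Qed.

Lemma cs_mul0l (x : A) : cs_zero A ** x = cs_zero A.
Proof.
  apply (cs_addr_eq_self (cs_zero A ** x)).
  now rewrite <- cs_mulDl, cs_add0.
Qed.

Lemma cs_mul0r (x : A) : x ** cs_zero A = cs_zero A.
Proof.
  apply (cs_addr_eq_self (x ** cs_zero A)).
  now rewrite <- cs_mulDr, cs_add0.
Qed.

Lemma cs_smul0 (a : Cpx) : cs_smul A a (cs_zero A) = cs_zero A.
Proof.
  apply (cs_addr_eq_self (cs_smul A a (cs_zero A))).
  now rewrite <- cs_smulDr, cs_add0.
Qed.

Lemma cs_double_eq0 (x : A) : cs_add A x x = cs_zero A -> x = cs_zero A.
Proof.
  intros H.
  assert (Half : Cone = Cadd (/2, 0)%R (/2, 0)%R)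
    by (unfold Cone, Cadd; simpl; f_equal; field).
  rewrite <- (cs_smul1 A x), Half, cs_smulDl, <- cs_smulDr, H.
  apply cs_smul0.
Qed.

Lemma cs_triple_eq_self (x : A) : cs_add A x (cs_add A x x) = x -> x = cs_zero A.
Proof. intros H. apply cs_double_eq0, (cs_addr_eq_self x), H. Qed.

Lemma cs_mul3_eq0l (a b c : A) : a ** b = cs_zero A -> a ** b ** c = cs_zero A.
Proof. intros H. rewrite H. apply cs_mul0l. Qed.

Lemma cs_mul3_eq0r (a b c : A) : b ** c = cs_zero A -> a ** b ** c = cs_zero A.
Proof. intros H. rewrite <- cs_mulA, H. apply cs_mul0r. Qed.

Lemma cs_star_one : cs_star A (cs_one A) = cs_one A.
Proof.
  transitivity (cs_star A (cs_one A) ** cs_star A (cs_star A (cs_one A))).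
  - rewrite cs_starK. symmetry. apply cs_mul1r.
  - rewrite <- cs_starM, cs_mul1r. apply cs_starK.
Qed.

Lemma cs_commute_of_sandwich (a b c : A) :
  cs_star A a = a -> cs_star A b = b -> cs_star A c = c -> b ** c = c ** b ->
  a ** b = a ** b ** c ** a -> a ** b = b ** a.
Proof.
  intros Ha Hb Hc Hbc E.
  assert (Adj : cs_star A (a ** b) = b ** a) by now rewrite cs_starM, Ha, Hb.
  rewrite <- Adj, E, !cs_starM, Ha, Hb, Hc, !cs_mulA.
  now rewrite <- (cs_mulA _ a c b), <- Hbc, cs_mulA.
Qed.

Definition cs_lsum (l : list nat) (f : nat -> A) : A :=
  fold_right (fun i acc => cs_add A (f i) acc) (cs_zero A) l.

Lemma cs_lsum_mull (x : A) l f :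
  x ** cs_lsum l f = cs_lsum l (fun t => x ** f t).
Proof.
  induction l as [|a l IH]; simpl; [apply cs_mul0r|].
  now rewrite cs_mulDr, IH.
Qed.

Lemma cs_lsum_mulr (x : A) l f :
  cs_lsum l f ** x = cs_lsum l (fun t => f t ** x).
Proof.
  induction l as [|a l IH]; simpl; [apply cs_mul0l|].
  now rewrite cs_mulDl, IH.
Qed.

Lemma cs_lsum_ext l (f g : nat -> A) :
  (forall t, In t l -> f t = g t) -> cs_lsum l f = cs_lsum l g.
Proof.
  induction l as [|a l IH]; simpl; intros H; auto.
  rewrite H, IH; auto.
Qed.

Lemma cs_lsum_eq0 l (f : nat -> A) :
  (forall t, In t l -> f t = cs_zero A) -> cs_lsum l f = cs_zero A.
Proof.
  induction l as [|a l IH]; simpl; intros H; auto.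
  rewrite H, IH; auto. apply cs_add0.
Qed.

Lemma cs_lsum_single l (f : nat -> A) t0 :
  NoDup l -> In t0 l -> (forall t, In t l -> t <> t0 -> f t = cs_zero A) ->
  cs_lsum l f = f t0.
Proof.
  induction l as [|a l IH]; simpl; intros Hl Ht0 H; [contradiction|].
  inversion Hl as [|? ? Ha Hl']; subst.
  destruct (Nat.eq_dec a t0) as [->|Hne].
  - rewrite cs_lsum_eq0; [apply cs_addr0|].
    intros t Ht. apply H; auto. intros ->. contradiction.
  - rewrite H, cs_add0, IH; auto. now destruct Ht0.
Qed.

Lemma cs_lsum_filter l (p : nat -> bool) (f : nat -> A) :
  (forall t, In t l -> p t = false -> f t = cs_zero A) ->
  cs_lsum l f = cs_lsum (filter p l) f.
Proof.
  induction l as [|a l IH]; simpl; intros H; auto.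
  destruct (p a) eqn:E; simpl; rewrite IH; auto.
  rewrite H, cs_add0; auto.
Qed.

End CstarArith.

Section SimpleGraph.
Context {n : nat} {adj : nat -> nat -> bool}.

Lemma in_nbrs i a : In a (nbrs n adj i) <-> a < n /\ adj i a = true.
Proof. unfold nbrs. rewrite filter_In, in_seq. split; intros [? ?]; split; auto; lia. Qed.

Lemma dist2_mid i k :
  dist_eq n adj i k 2 ->
  exists p, p < n /\ adj i p = true /\ adj p k = true /\ i <> k.
Proof.
  intros [[w [w0 [w2 [Hw Ha]]]] Hmin].
  exists (w 1). repeat split.
  - apply Hw; lia.
  - rewrite <- w0. apply Ha; lia.
  - rewrite <- w2. apply Ha; lia.
  - intros <-. apply (Hmin 0); [lia|].
    exists (fun _ => i). repeat split; intros; [|lia].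
    rewrite <- w0. apply Hw; lia.
Qed.

Context (Hs : simple_graph n adj).

Lemma adj_sym i j : adj i j = adj j i.
Proof. apply (proj1 Hs). Qed.

Lemma adj_irrefl i : adj i i = false.
Proof. apply (proj2 Hs). Qed.

Lemma common_nbr_unique (Hg : girth_ge n adj 5) x y a b :
  x < n -> y < n -> a < n -> b < n -> x <> y ->
  adj x a = true -> adj a y = true -> adj x b = true -> adj b y = true -> a = b.
Proof.
  intros Hx Hy Ha Hb Hxy Hxa Hay Hxb Hby.
  destruct (Nat.eq_dec a b) as [|Hab]; auto. exfalso.
  assert (Hne : forall v w, adj v w = true -> v <> w)
    by (intros v w E <-; rewrite adj_irrefl in E; discriminate).
  pose proof (Hne _ _ Hxa). pose proof (Hne _ _ Hay).
  pose proof (Hne _ _ Hxb). pose proof (Hne _ _ Hby).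
  set (c := fun t => match t with 0 => x | 1 => a | 2 => y | _ => b end).
  enough (5 <= 4) by lia.
  apply (Hg 4 c). repeat split; [lia | | |].
  - intros t Ht. destruct t as [|[|[|[|]]]]; simpl; auto; lia.
  - intros s t Hs4 Ht4 E.
    destruct s as [|[|[|[|s]]]]; destruct t as [|[|[|[|t]]]];
      simpl in E; try lia; congruence.
  - intros t Ht. destruct t as [|[|[|[|]]]]; simpl; try lia; auto.
    + now rewrite adj_sym.
    + now rewrite adj_sym.
Qed.

Lemma common_nbr_dec j b :
  (exists c, c < n /\ adj j c = true /\ adj c b = true) \/
  (forall c, c < n -> adj j c = true -> adj c b = false).
Proof.
  destruct (existsb (fun c => andb (adj j c) (adj c b)) (seq 0 n)) eqn:Ex.
  - left. apply existsb_exists in Ex as [c [Hc E]].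
    apply in_seq in Hc. apply andb_prop in E. exists c. intuition lia.
  - right. intros c Hc Hjc. destruct (adj c b) eqn:Ecb; auto.
    assert (existsb (fun c => andb (adj j c) (adj c b)) (seq 0 n) = true)
      by (apply existsb_exists; exists c; rewrite in_seq, Hjc, Ecb; split; auto; lia).
    congruence.
Qed.

Context (Hc : cubic n adj).

Lemma cubic_nbrs i : i < n -> exists a1 a2 a3, nbrs n adj i = [a1; a2; a3].
Proof.
  intros Hi. pose proof (Hc i Hi) as Hlen.
  destruct (nbrs n adj i) as [|a1 [|a2 [|a3 [|]]]]; simpl in Hlen; try lia.
  eauto.
Qed.

Lemma cubic_fourth_nbr q a b c d :
  q < n -> a < n -> b < n -> c < n -> d < n ->
  adj q a = true -> adj q b = true -> adj q c = true -> adj q d = true ->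
  a <> b -> a <> c -> b <> c -> d = a \/ d = b \/ d = c.
Proof.
  intros Hq Ha Hb Hc' Hd Hqa Hqb Hqc Hqd Hab Hac Hbc.
  destruct (Nat.eq_dec d a); auto. destruct (Nat.eq_dec d b); auto.
  destruct (Nat.eq_dec d c); auto. exfalso.
  assert (Hlen : length [a; b; c; d] <= length (nbrs n adj q)).
  { apply NoDup_incl_length.
    - repeat constructor; simpl; intuition congruence.
    - intros x Hx. apply in_nbrs. simpl in Hx; intuition subst; auto. }
  rewrite Hc in Hlen; simpl in Hlen; lia.
Qed.

End SimpleGraph.

Section MagicUnitary.
Context {n : nat} {adj : nat -> nat -> bool} {A : CstarAlg} {u : nat -> nat -> A}.
Context (Hu : aut_relations n adj A u).

Lemma u_star i j : i < n -> j < n -> cs_star A (u i j) = u i j.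
Proof. intros Hi Hj. symmetry. apply (proj1 Hu i j Hi Hj). Qed.

Lemma u_xor_eq0 a b c d :
  a < n -> b < n -> c < n -> d < n -> adj a c <> adj b d ->
  u a b ** u c d = cs_zero A.
Proof.
  intros Ha Hb Hc Hd Hx. apply (proj2 (proj2 Hu) a b c d); auto.
  destruct (adj a c), (adj b d); simpl; congruence.
Qed.

Lemma insert_row v (x y : A) :
  v < n -> x ** y = cs_lsum (seq 0 n) (fun c => x ** u v c ** y).
Proof.
  intros Hv. pose proof (proj1 (proj1 (proj2 Hu) v Hv)) as Row.
  transitivity (x ** (cs_sum A n (fun c => u v c) ** y)).
  { now rewrite Row, cs_mul1l. }
  unfold cs_sum. fold (cs_lsum (seq 0 n) (fun c => u v c)).
  rewrite cs_lsum_mulr, cs_lsum_mull.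
  apply cs_lsum_ext. intros. apply cs_mulA.
Qed.

Lemma insert_col v (x y : A) :
  v < n -> x ** y = cs_lsum (seq 0 n) (fun a => x ** u a v ** y).
Proof.
  intros Hv. pose proof (proj2 (proj1 (proj2 Hu) v Hv)) as Col.
  transitivity (x ** (cs_sum A n (fun a => u a v) ** y)).
  { now rewrite Col, cs_mul1l. }
  unfold cs_sum. fold (cs_lsum (seq 0 n) (fun a => u a v)).
  rewrite cs_lsum_mulr, cs_lsum_mull.
  apply cs_lsum_ext. intros. apply cs_mulA.
Qed.

Lemma insert_row_single v c0 (x y : A) :
  v < n -> c0 < n -> (forall c, c < n -> c <> c0 -> x ** u v c ** y = cs_zero A) ->
  x ** y = x ** u v c0 ** y.
Proof.
  intros Hv Hc0 H. rewrite (insert_row v x y Hv).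
  apply (cs_lsum_single _ (fun c => x ** u v c ** y)); [apply seq_NoDup | apply in_seq; lia |].
  intros c Hc. apply in_seq in Hc. apply H. lia.
Qed.

Lemma insert_row_single_r v c0 (x : A) :
  v < n -> c0 < n -> (forall c, c < n -> c <> c0 -> x ** u v c = cs_zero A) ->
  x = x ** u v c0.
Proof.
  intros Hv Hc0 H.
  rewrite <- (cs_mul1r A x) at 1. rewrite (insert_row_single v c0 x); auto.
  - apply cs_mul1r.
  - intros c Hc Hne. rewrite cs_mul1r. auto.
Qed.

Lemma aut_relations_transpose : aut_relations n adj A (fun a b => u b a).
Proof.
  destruct Hu as [R1 [R2 R3]]. split; [|split].
  - intros i j Hi Hj. apply R1; auto.
  - intros i Hi. destruct (R2 i Hi). split; auto.
  - intros i j k l Hi Hj Hk Hl X. apply R3; auto. now rewrite Bool.xorb_comm.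
Qed.

End MagicUnitary.

Section Girth5.
Context {n : nat} {adj : nat -> nat -> bool}.
Context (Hs : simple_graph n adj) (Hg : girth_ge n adj 5).
Context {A : CstarAlg} {u : nat -> nat -> A} (Hu : aut_relations n adj A u).

Lemma through_common_nbr i j k l v c0 :
  i < n -> j < n -> k < n -> l < n -> v < n -> c0 < n -> j <> l ->
  adj i v = true -> adj v k = true -> adj j c0 = true -> adj c0 l = true ->
  u i j ** u k l = u i j ** u v c0 ** u k l.
Proof.
  intros Hi Hj Hk Hl Hv Hc0 Hjl Hiv Hvk Hjc0 Hc0l.
  apply (insert_row_single Hu); auto. intros c Hc Hne.
  destruct (adj j c) eqn:Hjc; [destruct (adj c l) eqn:Hcl|].
  - exfalso. apply Hne, (common_nbr_unique Hs Hg j l); auto.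
  - apply cs_mul3_eq0r, (u_xor_eq0 Hu); auto. congruence.
  - apply cs_mul3_eq0l, (u_xor_eq0 Hu); auto. congruence.
Qed.

End Girth5.

Section Cubic.
Context {n : nat} {adj : nat -> nat -> bool}.
Context (Hs : simple_graph n adj) (Hc : cubic n adj) (Hg : girth_ge n adj 5).
Context {A : CstarAlg}.

Lemma cs_lsum_nbrs i (x : A) f :
  i < n -> (forall a, a < n -> adj i a = false -> f a = cs_zero A) ->
  (forall a, a < n -> adj i a = true -> f a = x) ->
  cs_lsum (seq 0 n) f = cs_add A x (cs_add A x x).
Proof.
  intros Hi Hoff Hon.
  rewrite (cs_lsum_filter _ (adj i)).
  2: { intros a Ha. apply in_seq in Ha. apply Hoff. lia. }
  fold (nbrs n adj i).
  destruct (cubic_nbrs Hc i Hi) as [a1 [a2 [a3 Hnb]]].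
  assert (Hin : forall a, In a (nbrs n adj i) -> f a = x)
    by (intros a Ha; apply in_nbrs in Ha as [? ?]; auto).
  rewrite Hnb in Hin |- *. simpl.
  rewrite !Hin by (simpl; auto). now rewrite cs_addr0.
Qed.

Lemma row_orth {u : nat -> nat -> A} (Hu : aut_relations n adj A u) i j b :
  i < n -> j < n -> b < n -> j <> b -> u i j ** u i b = cs_zero A.
Proof.
  intros Hi Hj Hb Hjb.
  destruct (adj j b) eqn:Hadj.
  { apply (u_xor_eq0 Hu); auto. rewrite (adj_irrefl Hs). congruence. }
  destruct (common_nbr_dec (n := n) (adj := adj) j b) as [[c0 [Hc0 [Hjc0 Hc0b]]] | Hnone].
  - apply cs_triple_eq_self. symmetry.
    rewrite (insert_col Hu c0 (u i j) (u i b) Hc0) at 1.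
    apply (cs_lsum_nbrs i); auto; intros a Ha Hia.
    + apply cs_mul3_eq0r, (u_xor_eq0 Hu); auto.
      rewrite (adj_sym Hs), Hia. congruence.
    + symmetry. apply (through_common_nbr Hs Hg Hu); auto.
      now rewrite (adj_sym Hs).
  - destruct (cubic_nbrs Hc i Hi) as [a [? [? Hnb]]].
    assert (Ha : In a (nbrs n adj i)) by (rewrite Hnb; simpl; auto).
    apply in_nbrs in Ha as [Ha Hia].
    rewrite (insert_row Hu a) by exact Ha.
    apply cs_lsum_eq0. intros c Hc'. apply in_seq in Hc'.
    destruct (adj j c) eqn:Hjc.
    + apply cs_mul3_eq0r, (u_xor_eq0 Hu); try lia.
      rewrite (adj_sym Hs), Hia, Hnone by (auto; lia). congruence.
    + apply cs_mul3_eq0l, (u_xor_eq0 Hu); try lia. congruence.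
Qed.

Lemma col_orth {u : nat -> nat -> A} (Hu : aut_relations n adj A u) i a j :
  i < n -> a < n -> j < n -> i <> a -> u i j ** u a j = cs_zero A.
Proof.
  intros Hi Ha Hj Hia.
  exact (row_orth (aut_relations_transpose Hu) j i a Hj Hi Ha Hia).
Qed.

Context {u : nat -> nat -> A} (Hu : aut_relations n adj A u).

Lemma u_comm_adj i j p q :
  i < n -> j < n -> p < n -> q < n -> adj i p = true -> adj j q = true ->
  u i j ** u p q = u p q ** u i j.
Proof.
  intros Hi Hj Hp Hq Hip Hjq.
  apply (cs_commute_of_sandwich _ _ (cs_one A));
    [apply (u_star Hu); auto | apply (u_star Hu); auto | apply cs_star_one
    | now rewrite cs_mul1l, cs_mul1r |].
  rewrite cs_mul1r. apply (insert_row_single_r Hu); auto.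
  intros c Hc' Hcj. destruct (adj q c) eqn:Hqc.
  - rewrite <- (through_common_nbr Hs Hg Hu i j i c p q); auto.
    + apply (row_orth Hu); auto.
    + now rewrite (adj_sym Hs).
  - apply cs_mul3_eq0r, (u_xor_eq0 Hu); auto.
    rewrite (adj_sym Hs), Hip. congruence.
Qed.

Lemma third_nbr_sandwich_eq0 i j k l p q c :
  i < n -> j < n -> k < n -> l < n -> p < n -> q < n -> c < n -> i <> k ->
  adj i p = true -> adj p k = true -> adj q j = true -> adj q l = true ->
  adj q c = true -> j <> l -> c <> j -> c <> l ->
  u i j ** u p q ** u k l ** u i c = cs_zero A.
Proof.
  intros Hi Hj Hk Hl Hp Hq Hc' Hik Hip Hpk Hqj Hql Hqc Hjl Hcj Hcl.
  assert (Hkp : adj k p = true) by now rewrite (adj_sym Hs).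
  rewrite <- (insert_row_single Hu k l); auto.
  - rewrite <- cs_mulA, <- (u_comm_adj i c p q), cs_mulA; auto.
    + apply cs_mul3_eq0l, (row_orth Hu); auto.
    + now rewrite (adj_sym Hs).
  - intros d Hd Hdl. destruct (adj q d) eqn:Hqd.
    + destruct (cubic_fourth_nbr Hc q j l c d) as [-> | [-> | ->]]; auto;
        try congruence.
      * apply cs_mul3_eq0l.
        rewrite <- cs_mulA, <- (u_comm_adj k j p q), cs_mulA; auto.
        -- apply cs_mul3_eq0l, (col_orth Hu); auto.
        -- now rewrite (adj_sym Hs).
      * apply cs_mul3_eq0r, (col_orth Hu); auto.
    + apply cs_mul3_eq0l, cs_mul3_eq0r, (u_xor_eq0 Hu); auto. congruence.
Qed.

Lemma common_nbrs_sandwich i j k l p q :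
  i < n -> j < n -> k < n -> l < n -> p < n -> q < n -> i <> k -> j <> l ->
  adj i p = true -> adj p k = true -> adj j q = true -> adj q l = true ->
  u i j ** u k l = u i j ** u k l ** u p q ** u i j.
Proof.
  intros Hi Hj Hk Hl Hp Hq Hik Hjl Hip Hpk Hjq Hql.
  assert (Hkl : u k l ** u p q = u p q ** u k l).
  { apply u_comm_adj; auto; now rewrite (adj_sym Hs). }
  transitivity (u i j ** u k l ** u p q).
  { rewrite (through_common_nbr Hs Hg Hu i j k l p q) at 1; auto.
    now rewrite <- !cs_mulA, Hkl. }
  apply (insert_row_single_r Hu); auto.
  intros c Hc' Hcj. destruct (adj q c) eqn:Hqc.
  - destruct (Nat.eq_dec c l) as [-> | Hcl].
    + rewrite <- cs_mulA, <- (u_comm_adj i l p q), cs_mulA; auto.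
      * apply cs_mul3_eq0l, cs_mul3_eq0r, (col_orth Hu); auto.
      * now rewrite (adj_sym Hs).
    + rewrite <- (cs_mulA _ (u i j)), Hkl, cs_mulA.
      apply (third_nbr_sandwich_eq0 i j k l p q c); auto; now rewrite (adj_sym Hs).
  - apply cs_mul3_eq0r, (u_xor_eq0 Hu); auto.
    rewrite (adj_sym Hs), Hip. congruence.
Qed.

Lemma u_comm_common_nbrs i j k l p q :
  i < n -> j < n -> k < n -> l < n -> p < n -> q < n -> i <> k -> j <> l ->
  adj i p = true -> adj p k = true -> adj j q = true -> adj q l = true ->
  u i j ** u k l = u k l ** u i j.
Proof.
  intros Hi Hj Hk Hl Hp Hq Hik Hjl Hip Hpk Hjq Hql.
  apply (cs_commute_of_sandwich _ _ (u p q)); try apply (u_star Hu); auto.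
  - apply u_comm_adj; auto; now rewrite (adj_sym Hs).
  - apply (common_nbrs_sandwich i j k l p q); auto.
Qed.

End Cubic.

Theorem lemma5p2 (n : nat) (adj : nat -> nat -> bool)
  (Hsimple : simple_graph n adj) (Hcubic : cubic n adj)
  (Hconn : connected n adj) (Hgirth : girth_ge n adj 5)
  (A : CstarAlg) (u : nat -> nat -> A) (Hu : aut_relations n adj A u) :
  forall i j k l, (i < n)%nat -> (j < n)%nat -> (k < n)%nat -> (l < n)%nat ->
    dist_eq n adj i k 2 -> dist_eq n adj j l 2 ->
    cs_mul A (u i j) (u k l) = cs_mul A (u k l) (u i j).
Proof.
  intros i j k l Hi Hj Hk Hl Hik Hjl.
  destruct (dist2_mid i k Hik) as [p [Hp [Hip [Hpk Hnik]]]].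
  destruct (dist2_mid j l Hjl) as [q [Hq [Hjq [Hql Hnjl]]]].
  exact (u_comm_common_nbrs Hsimple Hcubic Hgirth Hu i j k l p q
           Hi Hj Hk Hl Hp Hq Hnik Hnjl Hip Hpk Hjq Hql).
Qed.
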